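(* The functor $\vec{\mathrm{Sp}}$ from the category of multipointed $d$-spaces to the category of directed spaces is a left adjoint. Its right adjoint is the functor $\vec{\Omega}$ from directed spaces to multipointed $d$-spaces which takes a directed space $(|Y|,d(Y))$ to the multipointed $d$-space $(|Y|,|Y|,d(Y))$ (all points are states and the execution paths are the directed paths), and acts as the identity on underlying continuous maps.
   Context: Let $\mathbf{Top}$ be the category of $\Delta$-generated spaces (or of $\Delta$-Hausdorff $\Delta$-generated spaces). For $\ell>0$ let $\mu_\ell(t)=t/\ell$, $\mu_\ell:[0,\ell]\to[0,1]$. $\mathcal{M}(\ell,\ell')$ is the set of non-decreasing surjective continuous maps $[0,\ell]\to[0,\ell']$; $\mathcal{I}(\ell)$ is the set of non-decreasing continuous maps $[0,1]\to[0,\ell]$ (constant maps allowed). The Moore composition of paths $\gamma_1:[0,\ell_1]\to U$, $\gamma_2:[0,\ell_2]\to U$ with $\gamma_1(\ell_1)=\gamma_2(0)$ is $\gamma_1*\gamma_2:[0,\ell_1+\ell_2]\to U$, equal to $\gamma_1(t)$ on $[0,\ell_1]$ and $\gamma_2(t-\ell_1)$ on $[\ell_1,\ell_1+\ell_2]$. The normalized composition of $\gamma_1,\gamma_2:[0,1]\to U$ is $\gamma_1*_N\gamma_2=(\gamma_1\mu_{1/2})*(\gamma_2\mu_{1/2})$. A multipointed $d$-space is a triple $X=(|X|,X^0,\mathbb{P}^{\mathrm{top}}X)$: a space $|X|$, a subset $X^0\subset|X|$ of states, and a set $\mathbb{P}^{\mathrm{top}}X$ of continuous maps $[0,1]\to|X|$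 (execution paths) with endpoints in $X^0$, closed under precomposition by elements of $\mathcal{M}(1,1)$ and under normalized composition. Maps are continuous maps preserving states and execution paths. A directed space is a pair $Y=(|Y|,d(Y))$ with $d(Y)$ a set of continuous maps $[0,1]\to|Y|$ containing the constant paths, closed under normalized composition and under precomposition by elements of $\mathcal{I}(1)$; morphisms are continuous maps preserving directed paths. For a multipointed $d$-space $X$, $\vec{\mathrm{Sp}}(X)$ is the directed space $(|X|,d(X))$ where $d(X)$ consists of all constant paths and all Moore compositions $(\gamma_1\phi_1\mu_{\ell_1})*\dots*(\gamma_n\phi_n\mu_{\ell_n})$ with $n\ge1$, $\ell_i>0$, $\sum_i\ell_i=1$, $\gamma_i$ execution paths of $X$ and $\phi_i\in\mathcal{I}(1)$; on maps, $\vec{\mathrm{Sp}}$ is the identity on underlying continuous maps. *)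

From HB Require Import structures.
From mathcomp Require Import all_boot all_order all_algebra.
From mathcomp Require Import all_classical all_reals.
From mathcomp Require Import topology subtype_topology Rstruct Rstruct_topology.
Set Implicit Arguments. Unset Strict Implicit. Unset Printing Implicit Defensive.
Import Order.TTheory GRing.Theory Num.Theory.
Local Open Scope classical_set_scope.
Local Open Scope ring_scope.

Notation R := Rdefinitions.R.

Definition I01 : topologicalType := set_type ([set x : R | 0 <= x <= 1]).

Lemma clamp_in (x : R) : (Num.min (Num.max x 0) 1) \in ([set x : R | 0 <= x <= 1]).
Proof.
rewrite inE /=; apply/andP; split.
- by rewrite le_min ler01 andbT le_max lexx orbT.
- by rewrite ge_min lexx orbT.
Qed.

Definition clamp (x : R) : I01 := SigSub (clamp_in x).
Definition I0 : I01 := clamp 0.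
Definition I1 : I01 := clamp 1.

Definition tval (t : I01) : R := proj1_sig t.

Definition delta_generated (T : topologicalType) : Prop :=
  forall A : set T, open A <->
    (forall g : I01 -> T, continuous g -> open (g @^-1` A)).

Definition in_M11 (phi : I01 -> I01) : Prop :=
  continuous phi /\
  (forall s t : I01, tval s <= tval t -> tval (phi s) <= tval (phi t)) /\
  (forall u : I01, exists t, phi t = u).

Definition in_I1 (phi : I01 -> I01) : Prop :=
  continuous phi /\
  (forall s t : I01, tval s <= tval t -> tval (phi s) <= tval (phi t)).

Definition ncomp (T : Type) (g1 g2 : I01 -> T) : I01 -> T :=
  fun t => if tval t <= 1 / 2 then g1 (clamp (2 * tval t))
           else g2 (clamp (2 * tval t - 1)).

(* multipointed d-space structure (S = states, P = execution paths) on T *)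
Definition is_mdspace (T : topologicalType) (S : set T) (P : set (I01 -> T)) :=
  (forall g, P g -> continuous g) /\
  (forall g, P g -> S (g I0) /\ S (g I1)) /\
  (forall g phi, P g -> in_M11 phi -> P (g \o phi)) /\
  (forall g1 g2, P g1 -> P g2 -> g1 I1 = g2 I0 -> P (ncomp g1 g2)).

Definition is_dspace (T : topologicalType) (D : set (I01 -> T)) :=
  (forall g, D g -> continuous g) /\
  (forall x : T, D (fun _ => x)) /\
  (forall g1 g2, D g1 -> D g2 -> g1 I1 = g2 I0 -> D (ncomp g1 g2)) /\
  (forall g phi, D g -> in_I1 phi -> D (g \o phi)).

Definition md_morph (T U : topologicalType) (S : set T) (P : set (I01 -> T))
    (S' : set U) (P' : set (I01 -> U)) (f : T -> U) :=
  continuous f /\ (forall x, S x -> S' (f x)) /\ (forall g, P g -> P' (f \o g)).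

Definition d_morph (T U : topologicalType) (D : set (I01 -> T))
    (D' : set (I01 -> U)) (f : T -> U) :=
  continuous f /\ (forall g, D g -> D' (f \o g)).

Definition psum (l : nat -> R) (i : nat) : R := \sum_(j < i) l j.

(* d(X) for the directed space Sp(X): constant paths and Moore compositions
   (g_0 phi_0 mu_{l_0}) * ... * (g_{n-1} phi_{n-1} mu_{l_{n-1}}), n >= 1,
   l_i > 0, sum l_i = 1, g_i execution paths, phi_i in I(1). *)
Definition Sp_paths (T : topologicalType) (P : set (I01 -> T)) : set (I01 -> T) :=
  fun d =>
    (exists x : T, d = fun _ => x) \/
    exists (n : nat) (l : nat -> R) (g : nat -> I01 -> T) (phi : nat -> I01 -> I01),
      (0 < n)%N /\
      (forall i, (i < n)%N -> 0 < l i) /\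
      psum l n = 1 /\
      (forall i, (i < n)%N -> P (g i)) /\
      (forall i, (i < n)%N -> in_I1 (phi i)) /\
      (forall i, (i.+1 < n)%N -> g i (phi i I1) = g i.+1 (phi i.+1 I0)) /\
      (forall i (t : I01), (i < n)%N -> psum l i <= tval t <= psum l i.+1 ->
         d t = g i (phi i (clamp ((tval t - psum l i) / l i)))).

From Pilot Require Import Defs.
From mathcomp Require Import all_boot all_order all_algebra.
From mathcomp Require Import all_classical all_reals.
From mathcomp Require Import topology subtype_topology Rstruct Rstruct_topology.
From mathcomp Require Import normedtype.
From mathcomp Require Import ring lra.
Set Implicit Arguments. Unset Strict Implicit. Unset Printing Implicit Defensive.
Import Order.TTheory GRing.Theory Num.Theory.
Local Open Scope classical_set_scope.
Local Open Scope ring_scope.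

(* A non-constant path of Sp(X) is a Moore composition of execution paths
   reparametrized by maps of I(1); equivalently it is a [chain]: one such
   reparametrized path concatenated, at some cut point c in ]0,1[, in front of a
   shorter chain.  Chains are closed under concatenation (associativity of
   [concat_at]) and under reparametrization by I(1) (cut the reparametrization
   where it crosses c, by the intermediate value theorem), so Sp(X) is a directed
   space.  Conversely every directed space is closed under [concat_at c] for each
   c, because [concat_at c A B] is [ncomp A B] reparametrized by a map of I(1).
   Hence a continuous map sends Sp(X) into d(Y) as soon as it sends execution
   paths into d(Y), which is the adjunction, with identities on underlying maps.
   Neither the states nor delta-generatedness play any role. *)

(* [all_boot] re-exports the tuple projection [tval], which would shadow ours. *)
Local Notation tval := Defs.tval.

(** * Reparametrizations of the unit interval *)

Lemma continuous_tval : continuous tval.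
Proof. exact: (@initial_continuous _ _ set_val). Qed.

Lemma continuous_into_I01 (X : topologicalType) (f : X -> I01) :
  continuous (tval \o f) -> continuous f.
Proof. exact: (@continuous_comp_initial _ _ _ set_val). Qed.

Lemma tval01 (t : I01) : 0 <= tval t <= 1.
Proof. by case: t => x /= /set_mem. Qed.

Lemma tval_ge0 (t : I01) : 0 <= tval t.
Proof. by case/andP: (tval01 t). Qed.

Lemma tval_le1 (t : I01) : tval t <= 1.
Proof. by case/andP: (tval01 t). Qed.

Lemma tval_inj : injective tval.
Proof. by move=> s t st; apply: eq_sig_hprop. Qed.

Lemma tval_clamp (x : R) : 0 <= x <= 1 -> tval (clamp x) = x.
Proof. by case/andP=> x0 x1; rewrite /= (max_l x0) (min_l x1). Qed.

Lemma clampK : cancel tval clamp.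
Proof. by move=> t; apply: tval_inj; rewrite tval_clamp // tval01. Qed.

Lemma tval_I0 : tval I0 = 0.
Proof. by rewrite tval_clamp // lexx ler01. Qed.

Lemma tval_I1 : tval I1 = 1.
Proof. by rewrite tval_clamp // lexx ler01. Qed.

Lemma clamp_le (x y : R) : x <= y -> tval (clamp x) <= tval (clamp y).
Proof. by move=> xy; apply: le_min2 => //; apply: le_max2. Qed.

Lemma continuous_clamp : continuous clamp.
Proof.
apply: continuous_into_I01 => x.
apply: (@continuous_min _ _ (fun x : R => Num.max x 0) (fun _ => 1)); last exact: cvg_cst.
by apply: (@continuous_max _ _ id (fun _ => 0)) => //; exact: cvg_cst.
Qed.

Definition aff (a b : R) (t : I01) : I01 := clamp (a * tval t + b).

Lemma tval_aff (a b : R) (t : I01) :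
  0 <= a * tval t + b <= 1 -> tval (aff a b t) = a * tval t + b.
Proof. exact: tval_clamp. Qed.

Lemma continuous_aff (a b : R) : continuous (aff a b).
Proof.
move=> t; apply: (@continuous_comp _ _ _ (fun t => a * tval t + b) clamp); last first.
  exact: continuous_clamp.
apply: (@continuousD R R^o); last exact: cst_continuous.
by apply: continuousM; [exact: cst_continuous | exact: continuous_tval].
Qed.

Lemma in_I1_comp (phi psi : I01 -> I01) : in_I1 phi -> in_I1 psi -> in_I1 (phi \o psi).
Proof.
move=> [cphi mphi] [cpsi mpsi]; split; last by move=> s t st; apply/mphi/mpsi.
by move=> t; apply: continuous_comp; [exact: cpsi | exact: cphi].
Qed.

Lemma in_I1_aff (a b : R) : 0 <= a -> in_I1 (aff a b).
Proof.
move=> a0; split; first exact: continuous_aff.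
by move=> s t st; apply: clamp_le; rewrite lerD2r ler_wpM2l.
Qed.

Lemma in_I1_cst (u : I01) : in_I1 (fun _ => u).
Proof. by split => //; exact: cst_continuous. Qed.

Lemma in_I1_id : in_I1 id.
Proof. by split => // t; exact: cvg_id. Qed.

Lemma in_I1_M11 (phi : I01 -> I01) : in_M11 phi -> in_I1 phi.
Proof. by case=> cphi [mphi _]. Qed.

Lemma continuous_glue (Y : topologicalType) (c : R) (f g : I01 -> Y) :
  continuous f -> continuous g -> (forall t, tval t = c -> f t = g t) ->
  continuous (fun t => if tval t <= c then f t else g t).
Proof.
move=> cf cg fg t N /=.
have near_lt : tval t < c -> \forall s \near t, tval s < c.
  move=> tc; have := @continuous_tval t [set r | r < c]; apply.
  by apply: open_nbhs_nbhs; split => //; exact: open_lt.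
have near_gt : c < tval t -> \forall s \near t, c < tval s.
  move=> ct; have := @continuous_tval t [set r | c < r]; apply.
  by apply: open_nbhs_nbhs; split => //; exact: open_gt.
case: ltgtP => tc Nt.
- apply: (@filterS2 _ (nbhs t) _ _ _ _ _ (cf t N Nt) (near_lt tc)).
  by move=> s /= Ns /ltW ->.
- apply: (@filterS2 _ (nbhs t) _ _ _ _ _ (cg t N Nt) (near_gt tc)).
  by move=> s /= Ns; rewrite leNgt => ->.
- have Ngt : \forall s \near t, N (g s) by apply: cg; rewrite -fg.
  apply: (@filterS2 _ (nbhs t) _ _ _ _ _ (cf t N Nt) Ngt).
  by move=> s /= Nfs Ngs; case: ifP.
Qed.

(** * Concatenation at an arbitrary cut point *)

Definition squeeze_l (c : R) : I01 -> I01 := aff c 0.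
Definition squeeze_r (c : R) : I01 -> I01 := aff (1 - c) c.
Definition stretch_l (c : R) : I01 -> I01 := aff c^-1 0.
Definition stretch_r (c : R) : I01 -> I01 := aff (1 - c)^-1 (- c / (1 - c)).

Lemma div_in01 (x y : R) : 0 <= x -> x <= y -> 0 < y -> 0 <= x / y <= 1.
Proof. by move=> x0 xy y0; rewrite divr_ge0 ?ler_pdivrMr ?mul1r // ltW. Qed.

Lemma tval_squeeze_l (c : R) (t : I01) : 0 <= c <= 1 -> tval (squeeze_l c t) = c * tval t.
Proof. by case/andP=> c0 c1; rewrite tval_aff ?addr0 //; have := tval01 t; nra. Qed.

Lemma tval_squeeze_r (c : R) (t : I01) :
  0 <= c <= 1 -> tval (squeeze_r c t) = (1 - c) * tval t + c.
Proof. by case/andP=> c0 c1; rewrite tval_aff //; have := tval01 t; nra. Qed.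

Lemma tval_stretch_l (c : R) (t : I01) :
  0 < c -> tval t <= c -> tval (stretch_l c t) = tval t / c.
Proof. by move=> c0 tc; rewrite tval_aff addr0 mulrC // div_in01 ?tval_ge0. Qed.

Lemma tval_stretch_r (c : R) (t : I01) :
  c < 1 -> c <= tval t -> tval (stretch_r c t) = (tval t - c) / (1 - c).
Proof.
move=> c1 ct; have c1' : 0 < 1 - c by rewrite subr_gt0.
have e : (1 - c)^-1 * tval t + - c / (1 - c) = (tval t - c) / (1 - c).
  by rewrite mulrC -mulrDl.
by rewrite tval_aff e // div_in01 ?subr_ge0 ?lerD2r ?tval_le1.
Qed.

Lemma stretch_squeeze_l (c : R) (t : I01) : 0 < c <= 1 -> stretch_l c (squeeze_l c t) = t.
Proof.
move=> c01; have c01w : 0 <= c <= 1 by lra.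
have t01 := tval01 t; have c0 : 0 < c by lra.
apply: tval_inj; rewrite tval_stretch_l // tval_squeeze_l //; last by nra.
by rewrite mulrC mulKf ?gt_eqF.
Qed.

Lemma stretch_squeeze_r (c : R) (t : I01) : 0 <= c < 1 -> stretch_r c (squeeze_r c t) = t.
Proof.
move=> c01; have c01w : 0 <= c <= 1 by lra.
have t01 := tval01 t; have c1 : c < 1 by lra.
apply: tval_inj; rewrite tval_stretch_r // tval_squeeze_r //; last by nra.
by rewrite addrK mulrC mulKf // subr_eq0 gt_eqF.
Qed.

Lemma squeeze_stretch_l (c : R) (t : I01) :
  0 < c <= 1 -> tval t <= c -> squeeze_l c (stretch_l c t) = t.
Proof.
move=> c01 tc; have c01w : 0 <= c <= 1 by lra.
have c0 : 0 < c by lra.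
by apply: tval_inj; rewrite tval_squeeze_l // tval_stretch_l // mulrC divfK ?gt_eqF.
Qed.

Lemma squeeze_stretch_r (c : R) (t : I01) :
  0 <= c < 1 -> c <= tval t -> squeeze_r c (stretch_r c t) = t.
Proof.
move=> c01 ct; have c01w : 0 <= c <= 1 by lra.
have c1 : 1 - c != 0 by rewrite subr_eq0 gt_eqF; lra.
apply: tval_inj; rewrite tval_squeeze_r // tval_stretch_r //; last by lra.
by rewrite mulrC divfK // subrK.
Qed.

Lemma squeeze_l1_r0 (c : R) : 0 <= c <= 1 -> squeeze_l c I1 = squeeze_r c I0.
Proof.
move=> c01; apply: tval_inj.
by rewrite tval_squeeze_l // tval_squeeze_r // tval_I0 tval_I1 mulr1 mulr0 add0r.
Qed.

(* In the paper's notation, [concat_at c f g] is the Moore composition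
   [(f mu_c) * (g mu_(1-c))]. *)
Definition concat_at (T : Type) (c : R) (f g : I01 -> T) : I01 -> T :=
  fun t => if tval t <= c then f (stretch_l c t) else g (stretch_r c t).

Lemma concat_at_le (T : Type) (c : R) (f g : I01 -> T) (t : I01) :
  tval t <= c -> concat_at c f g t = f (stretch_l c t).
Proof. by rewrite /concat_at => ->. Qed.

Lemma concat_at_ge (T : Type) (c : R) (f g : I01 -> T) (t : I01) :
  0 < c < 1 -> f I1 = g I0 -> c <= tval t -> concat_at c f g t = g (stretch_r c t).
Proof.
move=> c01 fg; rewrite le_eqVlt => /predU1P[ct|ct]; last first.
  by rewrite /concat_at leNgt ct.
have c01w : 0 <= c <= 1 by lra.
have -> : t = squeeze_l c I1 by apply: tval_inj; rewrite tval_squeeze_l // tval_I1 mulr1.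
rewrite concat_at_le; last by rewrite tval_squeeze_l // tval_I1 mulr1.
rewrite stretch_squeeze_l; last by lra.
by rewrite fg squeeze_l1_r0 // stretch_squeeze_r //; lra.
Qed.

Section ConcatAtLemmas.
Variables (T : Type) (c : R) (f g : I01 -> T).

Lemma concat_at_squeeze_l (t : I01) : 0 < c <= 1 -> concat_at c f g (squeeze_l c t) = f t.
Proof.
move=> c01; have t01 := tval01 t.
rewrite concat_at_le ?stretch_squeeze_l // tval_squeeze_l; nra.
Qed.

Lemma concat_at_squeeze_r (t : I01) :
  0 < c < 1 -> f I1 = g I0 -> concat_at c f g (squeeze_r c t) = g t.
Proof.
move=> c01 fg; have t01 := tval01 t.
rewrite concat_at_ge ?stretch_squeeze_r //; [lra | rewrite tval_squeeze_r; nra].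
Qed.

Lemma concat_at_I0 : 0 < c -> concat_at c f g I0 = f I0.
Proof.
move=> c0; have I0c : tval I0 <= c by rewrite tval_I0 ltW.
by rewrite concat_at_le //; congr f; apply: tval_inj; rewrite tval_stretch_l // tval_I0 mul0r.
Qed.

Lemma concat_at_I1 : c < 1 -> concat_at c f g I1 = g I1.
Proof.
move=> c1; have cI1 : c < tval I1 by rewrite tval_I1.
rewrite /concat_at leNgt cI1; congr g; apply: tval_inj.
by rewrite tval_stretch_r ?ltW // tval_I1 divff // subr_eq0 gt_eqF.
Qed.

Lemma concat_at_split (h : I01 -> T) :
  0 < c < 1 -> concat_at c (h \o squeeze_l c) (h \o squeeze_r c) = h.
Proof.
move=> c01; apply: funext => t; have t01 := tval01 t.
case: (lerP (tval t) c) => tc.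
  by rewrite concat_at_le //= squeeze_stretch_l //; lra.
rewrite concat_at_ge /= ?squeeze_stretch_r ?squeeze_l1_r0 //; lra.
Qed.

Lemma concat_at_cst (x : T) : concat_at c (fun _ => x) (fun _ => x) = fun _ => x.
Proof. by apply: funext => t; rewrite /concat_at; case: ifP. Qed.

Lemma comp_concat_at (U : Type) (h : T -> U) :
  h \o concat_at c f g = concat_at c (h \o f) (h \o g).
Proof. by apply: funext => t; rewrite /= /concat_at; case: ifP. Qed.

End ConcatAtLemmas.

Section Reparametrization.
Variables (T : Type) (c : R) (f g : I01 -> T) (psi : I01 -> I01).

Lemma concat_at_comp_le : (forall u, tval (psi u) <= c) ->
  concat_at c f g \o psi = f \o (stretch_l c \o psi).
Proof. by move=> le; apply: funext => u; rewrite /= concat_at_le. Qed.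

Lemma concat_at_comp_ge : 0 < c < 1 -> f I1 = g I0 -> (forall u, c <= tval (psi u)) ->
  concat_at c f g \o psi = g \o (stretch_r c \o psi).
Proof. by move=> c01 fg ge; apply: funext => u; rewrite /= concat_at_ge. Qed.

End Reparametrization.

Lemma continuous_concat_at (X : topologicalType) (c : R) (f g : I01 -> X) :
  0 < c < 1 -> continuous f -> continuous g -> f I1 = g I0 ->
  continuous (concat_at c f g).
Proof.
move=> c01 cf cg fg; apply: continuous_glue => [t|t|t tc].
- by apply: continuous_comp; [exact: continuous_aff | exact: cf].
- by apply: continuous_comp; [exact: continuous_aff | exact: cg].
- by rewrite -(@concat_at_le _ c f g t) ?tc // concat_at_ge ?tc //; lra.
Qed.

Lemma in_I1_concat_at (c : R) (f g : I01 -> I01) : 0 < c < 1 ->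
  in_I1 f -> in_I1 g -> f I1 = g I0 -> in_I1 (concat_at c f g).
Proof.
move=> c01 [cf mf] [cg mg] fg; split; first exact: continuous_concat_at.
have c0 : 0 <= c^-1 by rewrite invr_ge0; lra.
have c1 : 0 <= (1 - c)^-1 by rewrite invr_ge0; lra.
have [_ ml] := in_I1_aff 0 c0; have [_ mr] := in_I1_aff (- c / (1 - c)) c1.
have f_le_g s t : tval (f s) <= tval (g t).
  apply: le_trans (mf s I1 _) _; first by rewrite tval_I1 tval_le1.
  by rewrite fg; apply: mg; rewrite tval_I0 tval_ge0.
move=> s t st; case: (lerP (tval t) c) => tc.
  by rewrite !concat_at_le ?(le_trans st) //; apply/mf/ml.
case: (lerP c (tval s)) => cs; last by rewrite concat_at_le ?(ltW cs) // concat_at_ge ?(ltW tc).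
by rewrite !concat_at_ge ?(le_trans cs st) //; apply/mg/mr.
Qed.

Lemma ncomp_concat_at (T : Type) (f g : I01 -> T) : ncomp f g = concat_at (1 / 2) f g.
Proof.
apply: funext => t; rewrite /ncomp /concat_at /stretch_l /stretch_r /aff.
by case: ifP => _; congr (_ (clamp _)); field.
Qed.

Lemma concat_atA (T : Type) (c c' : R) (A B C : I01 -> T) :
  0 < c < 1 -> 0 < c' < 1 -> A I1 = B I0 -> B I1 = C I0 ->
  concat_at c (concat_at c' A B) C =
  concat_at (c * c') A (concat_at ((c - c * c') / (1 - c * c')) B C).
Proof.
(* Both sides are determined by their restrictions to [[0, c c']] and
   [[c c', 1]] ([concat_at_split]); [c''] is the position of [c] in [[c c', 1]]. *)
move=> c01 c'01 AB BC; set c'' := (c - c * c') / (1 - c * c').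
have cc'01 : 0 < c * c' < 1 by nra.
have c''01 : 0 < c'' < 1 by rewrite /c'' divr_gt0 ?ltr_pdivrMr ?mul1r; nra.
have sq_ll t : squeeze_l c (squeeze_l c' t) = squeeze_l (c * c') t.
  apply: tval_inj; have := tval01 t => t01.
  by rewrite !tval_squeeze_l ?mulrA //; nra.
have sq_lr t : squeeze_l c (squeeze_r c' t) = squeeze_r (c * c') (squeeze_l c'' t).
  apply: tval_inj; have := tval01 t => t01.
  rewrite tval_squeeze_l ?tval_squeeze_r ?tval_squeeze_l; try nra.
  by rewrite /c''; field; rewrite subr_eq0 gt_eqF; nra.
have sq_rr t : squeeze_r c t = squeeze_r (c * c') (squeeze_r c'' t).
  apply: tval_inj; have := tval01 t => t01.
  rewrite !tval_squeeze_r; try nra.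
  by rewrite /c''; field; rewrite subr_eq0 gt_eqF; nra.
set h := LHS; rewrite -[LHS](concat_at_split h cc'01); congr concat_at.
  by apply: funext => t /=; rewrite -sq_ll /h !concat_at_squeeze_l //; lra.
rewrite -[LHS](concat_at_split _ c''01); congr concat_at; apply: funext => t /=.
  by rewrite -sq_lr /h concat_at_squeeze_l ?concat_at_squeeze_r //; lra.
by rewrite -sq_rr /h concat_at_squeeze_r // concat_at_I1 //; lra.
Qed.

(** * Chains of reparametrized execution paths *)

Lemma in_I1_IVT (psi : I01 -> I01) (c : R) :
  in_I1 psi -> tval (psi I0) < c -> c < tval (psi I1) ->
  exists2 s, 0 < s < 1 & tval (psi (clamp s)) = c.
Proof.
move=> [cpsi _] lt0 gt1.
have [s s01 psis] : exists2 s, s \in `[0, 1] & tval (psi (clamp s)) = c.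
  apply: IVT; first exact: ler01.
    apply: continuous_subspaceT => x.
    apply: (@continuous_comp _ _ _ (psi \o clamp) tval); last exact: continuous_tval.
    by apply: continuous_comp; [exact: continuous_clamp | exact: cpsi].
  by rewrite -/I0 -/I1 ge_min le_max (ltW lt0) (ltW gt1) orbT.
move: s01; rewrite in_itv /= => /andP[s0 s1]; exists s => //.
rewrite !lt_neqAle s0 s1 !andbT; apply/andP; split; apply/eqP => es.
  by move: psis; rewrite -es -/I0 => psis; lra.
by move: psis; rewrite es -/I1 => psis; lra.
Qed.

Inductive chain (T : Type) (P : set (I01 -> T)) : (I01 -> T) -> Prop :=
| chain_single g phi : P g -> in_I1 phi -> chain P (g \o phi)
| chain_cons g phi d c : P g -> in_I1 phi -> chain P d -> 0 < c < 1 ->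
    g (phi I1) = d I0 -> chain P (concat_at c (g \o phi) d).

Section Chains.
Variables (T : Type) (P : set (I01 -> T)).

Lemma chain_concat_at (d1 d2 : I01 -> T) (c : R) :
  chain P d1 -> chain P d2 -> d1 I1 = d2 I0 -> 0 < c < 1 -> chain P (concat_at c d1 d2).
Proof.
move=> h; elim: h c d2 => {d1} [g phi Pg Iphi|g phi d1 c' Pg Iphi _ IH c'01 e] c d2 Cd2 e12 c01.
  exact: chain_cons.
have c''01 : 0 < (c - c * c') / (1 - c * c') < 1.
  by rewrite divr_gt0 ?ltr_pdivrMr ?mul1r; nra.
rewrite concat_atA //; last by rewrite -e12 concat_at_I1 //; lra.
apply: chain_cons => //; last by rewrite concat_at_I0 //; lra.
- by apply: IH => //; rewrite -e12 concat_at_I1 //; lra.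
- by nra.
Qed.

Lemma chain_split (s : R) (h : I01 -> T) : 0 < s < 1 ->
  chain P (h \o squeeze_l s) -> chain P (h \o squeeze_r s) -> chain P h.
Proof.
move=> s01 Cl Cr; rewrite -(concat_at_split h s01); apply: chain_concat_at => //.
by rewrite /= squeeze_l1_r0 //; lra.
Qed.

End Chains.


Lemma chain_reparam (T : Type) (P : set (I01 -> T)) (d : I01 -> T) (psi : I01 -> I01) :
  chain P d -> in_I1 psi -> chain P (d \o psi).
Proof.
move=> Cd; elim: Cd psi => {d} [g phi Pg Iphi|g phi d c Pg Iphi _ IHd c01 e] psi Ipsi.
  exact: chain_single Pg (in_I1_comp Iphi Ipsi).
have [_ mpsi] := Ipsi.
have in_left (psi' : I01 -> I01) : in_I1 psi' -> (forall u, tval (psi' u) <= c) ->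
    chain P (concat_at c (g \o phi) d \o psi').
  move=> Ipsi' le; rewrite concat_at_comp_le //; apply: chain_single Pg _.
  by apply/(in_I1_comp Iphi)/in_I1_comp => //; apply: in_I1_aff; rewrite invr_ge0; lra.
have in_right (psi' : I01 -> I01) : in_I1 psi' -> (forall u, c <= tval (psi' u)) ->
    chain P (concat_at c (g \o phi) d \o psi').
  move=> Ipsi' ge; rewrite concat_at_comp_ge //; apply: IHd.
  by apply: in_I1_comp => //; apply: in_I1_aff; rewrite invr_ge0; lra.
case: (lerP (tval (psi I1)) c) => [le1|gt1].
  by apply: in_left => // u; apply: le_trans le1; apply: mpsi; rewrite tval_I1 tval_le1.
case: (lerP c (tval (psi I0))) => [ge0|lt0].
  by apply: in_right => // u; apply: le_trans ge0 _; apply: mpsi; rewrite tval_I0 tval_ge0.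
(* [psi] crosses the cut point: split its domain at a preimage [s] of [c]. *)
have [s s01 psis] := in_I1_IVT Ipsi lt0 gt1.
have s01w : 0 <= s <= 1 by lra.
apply: (chain_split s01).
  apply: in_left => [|u]; first by apply: in_I1_comp Ipsi (in_I1_aff _ _); lra.
  rewrite -psis; apply: mpsi; rewrite tval_squeeze_l // tval_clamp //.
  by rewrite ger_pMr ?tval_le1 //; lra.
apply: in_right => [|u]; first by apply: in_I1_comp Ipsi (in_I1_aff _ _); lra.
rewrite -psis; apply: mpsi; rewrite tval_squeeze_r // tval_clamp // lerDr.
by rewrite mulr_ge0 ?tval_ge0 //; lra.
Qed.

Lemma chain_continuous (T : topologicalType) (P : set (I01 -> T)) (d : I01 -> T) :
  (forall g, P g -> continuous g) -> chain P d -> continuous d.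
Proof.
move=> Pcont; elim=> {d} [g phi Pg [cphi _]|g phi d c Pg [cphi _] _ cd c01 e].
  by move=> t; apply: continuous_comp; [exact: cphi | exact: Pcont].
apply: continuous_concat_at => // t.
by apply: continuous_comp; [exact: cphi | exact: Pcont].
Qed.

(** * Moore compositions are chains *)

Lemma psum0 (l : nat -> R) : psum l 0 = 0.
Proof. by rewrite /psum big_ord0. Qed.

Lemma psumS (l : nat -> R) (i : nat) : psum l i.+1 = psum l i + l i.
Proof. by rewrite /psum big_ord_recr. Qed.

Lemma psumSl (l : nat -> R) (i : nat) : psum l i.+1 = l 0%N + psum (fun j => l j.+1) i.
Proof. by rewrite /psum big_ord_recl. Qed.

Lemma psumZ (a : R) (l : nat -> R) (i : nat) : psum (fun j => a * l j) i = a * psum l i.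
Proof. by rewrite /psum mulr_sumr. Qed.

Lemma psum_ge0 (l : nat -> R) (n i : nat) :
  (forall j, (j < n)%N -> 0 < l j) -> (i <= n)%N -> 0 <= psum l i.
Proof.
move=> lpos; elim: i => [|i IH] lei; first by rewrite psum0.
by rewrite psumS addr_ge0 ?IH 1?ltnW // ltW ?lpos.
Qed.

Definition moore_path (T : Type) (P : set (I01 -> T)) (d : I01 -> T) (n : nat)
    (l : nat -> R) (g : nat -> I01 -> T) (phi : nat -> I01 -> I01) : Prop :=
  (0 < n)%N /\
  (forall i, (i < n)%N -> 0 < l i) /\
  psum l n = 1 /\
  (forall i, (i < n)%N -> P (g i)) /\
  (forall i, (i < n)%N -> in_I1 (phi i)) /\
  (forall i, (i.+1 < n)%N -> g i (phi i I1) = g i.+1 (phi i.+1 I0)) /\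
  (forall i (t : I01), (i < n)%N -> psum l i <= tval t <= psum l i.+1 ->
     d t = g i (phi i (clamp ((tval t - psum l i) / l i)))).

Section MoorePaths.
Variables (T : Type) (P : set (I01 -> T)).

Lemma moore_I0 d n l g phi : moore_path P d n l g phi -> d I0 = g 0%N (phi 0%N I0).
Proof.
case=> n0 [lpos [_ [_ [_ [_ seg]]]]].
rewrite (seg 0%N) // ?psum0 ?tval_I0 ?subrr ?mul0r // psumS psum0 add0r lexx.
by rewrite ltW ?lpos.
Qed.

Lemma moore_single g phi : P g -> in_I1 phi ->
  moore_path P (g \o phi) 1 (fun _ => 1) (fun _ => g) (fun _ => phi).
Proof.
move=> Pg Iphi; do 2!split => //; split; first by rewrite psumS psum0 add0r.
do 3!split => //; case=> // t _ _.
by rewrite /= psum0 subr0 divr1 clampK.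
Qed.

Lemma moore_cons d n l gs phis g phi c :
  moore_path P d n l gs phis -> P g -> in_I1 phi -> 0 < c < 1 -> g (phi I1) = d I0 ->
  moore_path P (concat_at c (g \o phi) d) n.+1
    (fun i => if i is j.+1 then (1 - c) * l j else c)
    (fun i => if i is j.+1 then gs j else g)
    (fun i => if i is j.+1 then phis j else phi).
Proof.
move=> M Pg Iphi c01 e; have d0 := moore_I0 M.
case: M => n0 [lpos [lsum [Pgs [Iphis [link seg]]]]].
have psumS' j : psum (fun i => if i is j.+1 then (1 - c) * l j else c) j.+1 =
                c + (1 - c) * psum l j by rewrite psumSl psumZ.
split => //; split; first by case=> [|j] /= jn; [lra | rewrite mulr_gt0 ?lpos //; lra].
split; first by rewrite psumS' lsum; lra.
split; first by case.
split; first by case.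
split; first by case=> [|j] /= jn; [rewrite e d0 | exact: link].
case=> [|j] t /= jn.
  rewrite psum0 psumS' psum0 mulr0 addr0 subr0 => /andP[_ tc].
  by rewrite concat_at_le //= /stretch_l /aff addr0 mulrC.
rewrite !psumS' => /andP[tlo thi].
have Lj : 0 <= psum l j by apply: (psum_ge0 (n := n)) => //; exact: ltnW.
have ct : c <= tval t by nra.
have c1 : 0 < 1 - c by lra.
have lj : 0 < l j by rewrite lpos.
have tj : tval (stretch_r c t) = (tval t - c) / (1 - c) by rewrite tval_stretch_r //; lra.
have range : psum l j <= tval (stretch_r c t) <= psum l j.+1.
  by rewrite tj ler_pdivlMr // ler_pdivrMr //; apply/andP; split; lra.
rewrite concat_at_ge // (seg j _ jn range) tj.
by congr (gs j (phis j (clamp _))); field; rewrite !gt_eqF.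
Qed.

Lemma chain_moore d : chain P d -> exists n l g phi, moore_path P d n l g phi.
Proof.
elim=> {d} [g phi Pg Iphi | g phi d c Pg Iphi _ [n [l [gs [phis M]]]] c01 e].
  by exists 1%N, (fun _ => 1), (fun _ => g), (fun _ => phi); exact: moore_single.
by do 4!eexists; exact: moore_cons M Pg Iphi c01 e.
Qed.

Lemma moore_one d l g phi : moore_path P d 1 l g phi -> d = g 0%N \o phi 0%N.
Proof.
case=> _ [_ [lsum [_ [_ [_ seg]]]]]; move: lsum; rewrite psumS psum0 add0r => l0.
apply: funext => t /=; rewrite (seg 0%N) //; last by rewrite psum0 psumS psum0 add0r l0 tval01.
by rewrite psum0 subr0 l0 divr1 clampK.
Qed.

Lemma moore_first_in01 d n l g phi : moore_path P d n.+2 l g phi -> 0 < l 0%N < 1.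
Proof.
case=> _ [lpos [lsum _]]; move: lsum; rewrite psumSl psumS.
have : 0 <= psum (fun j => l j.+1) n by apply: (psum_ge0 (n := n.+1)) => // j jn; exact: lpos.
by have := lpos 0%N isT; have := lpos n.+1 (ltnSn _); lra.
Qed.

Lemma moore_head d n l g phi :
  moore_path P d n.+2 l g phi -> d \o squeeze_l (l 0%N) = g 0%N \o phi 0%N.
Proof.
move=> M; have l01 := moore_first_in01 M; case: M => _ [_ [_ [_ [_ [_ seg]]]]].
apply: funext => t /=; have t01 := tval01 t.
have st : tval (squeeze_l (l 0%N) t) = l 0%N * tval t by rewrite tval_squeeze_l //; lra.
rewrite (seg 0%N _ isT); last by rewrite st psumS !psum0 add0r; nra.
by rewrite st psum0 subr0 mulrC mulKf ?gt_eqF ?clampK //; lra.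
Qed.

Lemma moore_tail d n l g phi : moore_path P d n.+2 l g phi ->
  moore_path P (d \o squeeze_r (l 0%N)) n.+1
    (fun i => (1 - l 0%N)^-1 * l i.+1) (fun i => g i.+1) (fun i => phi i.+1).
Proof.
move=> M; move: (moore_first_in01 M); move eq_c: (l 0%N) => c c01.
case: M => _ [lpos [lsum [Pg [Iphi [link seg]]]]]; have c1 : 0 < 1 - c by lra.
have psum_tail i : psum l i.+1 = c + (1 - c) * psum (fun j => (1 - c)^-1 * l j.+1) i.
  by rewrite psumZ mulVKf ?psumSl ?eq_c // gt_eqF.
split => //; split; first by move=> i i_lt; rewrite mulr_gt0 ?invr_gt0 ?lpos.
split.
  rewrite psumZ; have -> : psum (fun j => l j.+1) n.+1 = 1 - c.
    by move: lsum; rewrite psumSl eq_c; lra.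
  by rewrite mulVf ?gt_eqF.
split; first by move=> i; exact: Pg i.+1.
split; first by move=> i; exact: Iphi i.+1.
split; first by move=> i; exact: link i.+1.
move=> i t i_lt /andP[lo hi]; have t01 := tval01 t.
have st : tval (squeeze_r c t) = (1 - c) * tval t + c by rewrite tval_squeeze_r //; lra.
have range : psum l i.+1 <= tval (squeeze_r c t) <= psum l i.+2 by rewrite st !psum_tail; nra.
rewrite /= (seg i.+1 _ i_lt range) st psum_tail.
have li : 0 < l i.+1 by rewrite lpos.
by congr (g i.+1 (phi i.+1 (clamp _))); field; rewrite !gt_eqF.
Qed.

Lemma moore_chain d n l g phi : moore_path P d n l g phi -> chain P d.
Proof.
elim: n d l g phi => [|[|n] IH] d l g phi M; first by case: M.
  rewrite (moore_one M); case: M => _ [_ [_ [Pg [Iphi _]]]].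
  exact: chain_single (Pg 0%N isT) (Iphi 0%N isT).
apply: (chain_split (moore_first_in01 M)); last exact: IH _ _ _ _ (moore_tail M).
rewrite (moore_head M); case: M => _ [_ [_ [Pg [Iphi _]]]].
exact: chain_single (Pg 0%N isT) (Iphi 0%N isT).
Qed.

End MoorePaths.

Lemma Sp_pathsP (T : topologicalType) (P : set (I01 -> T)) (d : I01 -> T) :
  Sp_paths P d <-> (exists x : T, d = fun _ => x) \/ chain P d.
Proof.
split=> [[cst|[n [l [g [phi M]]]]]|[cst|/chain_moore M]]; [by left|right|by left|by right].
exact: moore_chain M.
Qed.

(** * Sp, Omega and the adjunction *)

Lemma Sp_paths_concat_at (T : topologicalType) (P : set (I01 -> T)) (d1 d2 : I01 -> T)
    (c : R) :
  Sp_paths P d1 -> Sp_paths P d2 -> d1 I1 = d2 I0 -> 0 < c < 1 ->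
  Sp_paths P (concat_at c d1 d2).
Proof.
move=> /Sp_pathsP[[x ->]|C1] /Sp_pathsP[[y ->]|C2] /= e c01; apply/Sp_pathsP.
- by left; exists x; rewrite e concat_at_cst.
- right; have -> : concat_at c (fun _ => x) d2 = d2 \o concat_at c (fun _ => I0) id.
    by rewrite comp_concat_at e.
  apply: chain_reparam => //.
  by apply: in_I1_concat_at => //; [exact: in_I1_cst | exact: in_I1_id].
- right; have -> : concat_at c d1 (fun _ => y) = d1 \o concat_at c id (fun _ => I1).
    by rewrite comp_concat_at -e.
  apply: chain_reparam => //.
  by apply: in_I1_concat_at => //; [exact: in_I1_id | exact: in_I1_cst].
- by right; exact: chain_concat_at.
Qed.

Lemma Sp_is_dspace (T : topologicalType) (P : set (I01 -> T)) :
  (forall g, P g -> continuous g) -> is_dspace (Sp_paths P).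
Proof.
move=> Pcont; split.
  by move=> d /Sp_pathsP[[x ->]|/(chain_continuous Pcont)] //; exact: cst_continuous.
split; first by move=> x; left; exists x.
split; first by move=> d1 d2 S1 S2 e; rewrite ncomp_concat_at; apply: Sp_paths_concat_at => //; lra.
move=> d phi /Sp_pathsP[[x ->]|Cd] Iphi; first by left; exists x.
by apply/Sp_pathsP; right; exact: chain_reparam.
Qed.

Lemma Omega_is_mdspace (U : topologicalType) (D : set (I01 -> U)) :
  is_dspace D -> is_mdspace setT D.
Proof.
move=> [Dcont [_ [Dncomp Dreparam]]]; do 3!split => //.
by move=> g phi Dg /in_I1_M11; exact: Dreparam.
Qed.

Lemma chain_map (T U : Type) (P : set (I01 -> T)) (Q : set (I01 -> U)) (f : T -> U)
    (d : I01 -> T) :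
  (forall g, P g -> Q (f \o g)) -> chain P d -> chain Q (f \o d).
Proof.
move=> PQ; elim=> {d} [g phi Pg Iphi|g phi d c Pg Iphi _ Cd c01 e].
  exact: chain_single (PQ g Pg) Iphi.
by rewrite comp_concat_at; apply: chain_cons (PQ g Pg) Iphi Cd c01 _; rewrite /= e.
Qed.

Lemma Sp_morph (T U : topologicalType) (P : set (I01 -> T)) (Q : set (I01 -> U)) (f : T -> U) :
  continuous f -> (forall g, P g -> Q (f \o g)) -> d_morph (Sp_paths P) (Sp_paths Q) f.
Proof.
move=> cf PQ; split=> // d /Sp_pathsP[[x ->]|Cd]; apply/Sp_pathsP.
  by left; exists (f x).
by right; exact: chain_map PQ Cd.
Qed.

Lemma dspace_concat_at (U : topologicalType) (D : set (I01 -> U)) (A B : I01 -> U) (c : R) :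
  is_dspace D -> D A -> D B -> A I1 = B I0 -> 0 < c < 1 -> D (concat_at c A B).
Proof.
have half : 0 < (1 / 2 : R) <= 1 by lra.
have in_l : in_I1 (squeeze_l (1 / 2)) by apply: in_I1_aff; lra.
have in_r : in_I1 (squeeze_r (1 / 2)) by apply: in_I1_aff; lra.
have lr : squeeze_l (1 / 2) I1 = squeeze_r (1 / 2) I0 by apply: squeeze_l1_r0; lra.
move=> [_ [_ [Dncomp Dreparam]]] DA DB AB c01.
have -> : concat_at c A B = ncomp A B \o concat_at c (squeeze_l (1 / 2)) (squeeze_r (1 / 2)).
  rewrite comp_concat_at ncomp_concat_at; congr concat_at; apply: funext => t /=.
    by rewrite concat_at_squeeze_l.
  by rewrite concat_at_squeeze_r //; lra.
apply: Dreparam; first exact: Dncomp.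
exact: in_I1_concat_at.
Qed.

Lemma dspace_chain (U : topologicalType) (D : set (I01 -> U)) (d : I01 -> U) :
  is_dspace D -> chain D d -> D d.
Proof.
move=> Dd; have [_ [_ [_ Dreparam]]] := Dd.
elim=> {d} [g phi Dg Iphi|g phi d c Dg Iphi _ Dd' c01 e]; first exact: Dreparam.
by apply: dspace_concat_at => //; exact: Dreparam.
Qed.

Lemma Sp_Omega_adjunction (T U : topologicalType) (S : set T) (P : set (I01 -> T))
    (D : set (I01 -> U)) (f : T -> U) :
  is_dspace D -> (d_morph (Sp_paths P) D f <-> md_morph S P setT D f).
Proof.
move=> Dd; split=> [[cf fD]|[cf [_ fP]]].
  by do 2!split => //; move=> g Pg; apply/fD/Sp_pathsP; right; exact: chain_single Pg in_I1_id.
split=> // d /Sp_pathsP[[x ->]|Cd]; first by have [_ [Dcst _]] := Dd; exact: Dcst.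
exact/(dspace_chain Dd)/(chain_map fP).
Qed.

Theorem theorem3p5 :
  (forall (T : topologicalType) (S : set T) (P : set (I01 -> T)),
     delta_generated T -> is_mdspace S P -> is_dspace (Sp_paths P)) /\
  (forall (U : topologicalType) (D : set (I01 -> U)),
     delta_generated U -> is_dspace D -> is_mdspace setT D) /\
  (forall (T T' : topologicalType) (S : set T) (P : set (I01 -> T))
          (S' : set T') (P' : set (I01 -> T')) (f : T -> T'),
     delta_generated T -> delta_generated T' ->
     is_mdspace S P -> is_mdspace S' P' ->
     md_morph S P S' P' f -> d_morph (Sp_paths P) (Sp_paths P') f) /\
  (forall (U U' : topologicalType) (D : set (I01 -> U)) (D' : set (I01 -> U'))
          (f : U -> U'),
     delta_generated U -> delta_generated U' ->
     is_dspace D -> is_dspace D' ->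
     d_morph D D' f -> md_morph setT D setT D' f) /\
  (forall (T U : topologicalType) (S : set T) (P : set (I01 -> T))
          (D : set (I01 -> U)) (f : T -> U),
     delta_generated T -> delta_generated U ->
     is_mdspace S P -> is_dspace D ->
     (d_morph (Sp_paths P) D f <-> md_morph S P setT D f)).
Proof.
split; first by move=> T S P _ [Pcont _]; exact: Sp_is_dspace.
split; first by move=> U D _; exact: Omega_is_mdspace.
split; first by move=> T T' S P S' P' f _ _ _ _ [cf [_ fP]]; exact: Sp_morph.
split; first by move=> U U' D D' f _ _ _ _ [cf fD].
by move=> T U S P D f _ _ _; exact: Sp_Omega_adjunction.
Qed.
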